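(* Let $X\subset\mathbb{R}^n$ be a closed set which is the closure of its interior, $f:X\to\mathbb{R}^n$ locally Lipschitz, and suppose $\dot x=f(x)$ is forward complete with flow $\varphi_t$. Let $K$ be a closed convex cone with nonempty interior and suppose the system is strongly monotone in reversed time: for every $\xi_1,\xi_2\in X$ and every $t<0$ such that $\varphi_t(\xi_1),\varphi_t(\xi_2)$ are defined, $\xi_1\succ\xi_2$ implies $\varphi_t(\xi_1)\gg\varphi_t(\xi_2)$. Let $v\in\operatorname{int}(K)$, $|v|=1$, with $X$ invariant under translation by $v$ and $\varphi_t(\xi+\lambda v)=\varphi_t(\xi)+\lambda v$ for all $\lambda\in\mathbb{R}$, $\xi\in X$ and all $t$ at which $\varphi_t(\xi)$ is defined. Let $\pi_v(x)=x-(v'x)v$. Then for every $\xi\in X$ such that $\pi_v(\varphi_t(\xi))$ is bounded for $t\ge0$, $\pi_v(\varphi_t(\xi))$ converges as $t\to\infty$ to an equilibrium of the projected system $\dot{\tilde x}=(I-vv')f(\tilde x)$ on $X\cap v^\perp$; moreover this equilibrium is unique (the projected system has no other equilibrium).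
   Context: The cone $K$ satisfies $K+K\subset K$, $\alpha K\subset K$ for $\alpha\ge0$, $K\cap(-K)=\{0\}$. $\xi_1\succeq\xi_2$ iff $\xi_1-\xi_2\in K$; $\xi_1\succ\xi_2$ iff additionally $\xi_1\neq\xi_2$; $\xi_1\gg\xi_2$ iff $\xi_1-\xi_2\in\operatorname{int}(K)$. Forward complete means every solution is uniquely defined in $X$ on an interval containing $[0,\infty)$ in its interior. *)

From HB Require Import structures.
From mathcomp Require Import all_boot all_order all_algebra.
From mathcomp Require Import all_classical all_reals all_analysis.
Set Implicit Arguments. Unset Strict Implicit. Unset Printing Implicit Defensive.
Import Order.TTheory GRing.Theory Num.Theory.
Import numFieldNormedType.Exports.
Local Open Scope classical_set_scope.
Local Open Scope ring_scope.

Section Defs.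
Context {R : realType} {n : nat}.
Local Notation V := 'rV[R]_n.

Definition dotv (u w : V) : R := \sum_(i < n) u ord0 i * w ord0 i.

(* pi_v(x) = x - (v'x) v ; also (I - v v') y = pi_v y *)
Definition piv (v x : V) : V := x - dotv v x *: v.

Definition is_interval (J : set R) :=
  forall a b c, J a -> J c -> a <= b -> b <= c -> J b.

Definition solution (X : set V) (f : V -> V) (J : set R) (x : R -> V) :=
  [/\ is_interval J, (forall t, J t -> X (x t)),
      {within J, continuous x} &
      (forall t, interior J t -> is_derive t 1 x (f (x t)))].

Definition locally_lipschitz_on (X : set V) (f : V -> V) :=
  forall x, X x -> exists r : R, exists L : R, 0 < r /\
    forall y z, X y -> X z -> `|y - x| < r -> `|z - x| < r ->
      `|f y - f z| <= L * `|y - z|.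

(* phi is the (maximal) flow of x' = f(x) in X, D xi being the maximal domain
   of the solution through xi: phi(., xi) is a solution on D xi with
   phi 0 xi = xi, and every solution through xi on an interval containing 0
   lives inside D xi and agrees with phi(., xi). *)
Definition is_flow (X : set V) (f : V -> V) (D : V -> set R) (phi : R -> V -> V) :=
  forall xi, X xi ->
    [/\ D xi 0, phi 0 xi = xi, solution X f (D xi) (fun t => phi t xi) &
        forall (J : set R) (x : R -> V), J 0 -> x 0 = xi -> solution X f J x ->
          J `<=` D xi /\ (forall t, J t -> x t = phi t xi)].

Definition forward_complete (X : set V) (f : V -> V) (D : V -> set R)
    (phi : R -> V -> V) :=
  is_flow X f D phi /\
  forall xi, X xi -> exists a : R, a < 0 /\ `]a, +oo[ `<=` D xi.

Definition proper_cone (K : set V) :=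
  [/\ closed K, (forall a b, K a -> K b -> K (a + b)),
      (forall (al : R) a, 0 <= al -> K a -> K (al *: a)),
      (forall a, K a -> K (- a) -> a = 0) &
      (exists a, interior K a)].

Definition cone_succ (K : set V) (x y : V) := K (x - y) /\ x <> y.
Definition cone_gg (K : set V) (x y : V) := interior K (x - y).

End Defs.

(* For the interior point v of K put gauge u = inf {l | u + l v \in K} and
   osc u = gauge u + gauge (- u): a seminorm vanishing exactly on the multiples
   of v and unchanged by adding them (for the orthant and v = (1, ..., 1) it is
   max_i u_i - min_i u_i).  A map that commutes with translation along v and
   sends z > y to F z >> F y strictly decreases osc (z - y) unless z - y is a
   multiple of v.  The backward-time maps of the flow are such maps, so
   g t = osc (phi_(t+s) xi - phi_t xi) is nondecreasing for t >= 0.  If the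
   projected orbit is bounded, g has a finite supremum L, and a cluster point
   (q, q') of (pi_v phi_t xi, pi_v phi_(t+s) xi) in the closed set X satisfies
   osc (q' - q) <= L <= osc (phi_tau q' - phi_tau q) for a small tau < 0; strict
   decrease forces L = 0.  Hence phi_s xi - xi is a multiple of v for every
   s >= 0: the projected orbit is constant and pi_v xi is an equilibrium of the
   projected system.  Two such equilibria move along lines parallel to v, so the
   flow preserves their osc distance, which is therefore 0, and on v^perp they
   coincide. *)

From HB Require Import structures.
From mathcomp Require Import all_boot all_order all_algebra.
From mathcomp Require Import all_classical all_reals all_analysis.
From mathcomp Require Import ring lra.
Import Order.TTheory GRing.Theory Num.Theory.
Import numFieldNormedType.Exports.
Local Open Scope classical_set_scope.
Local Open Scope ring_scope.

Set Implicit Arguments. Unset Strict Implicit. Unset Printing Implicit Defensive.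

Record order_unit {R : realType} {V : normedModType R} (K : set V) (v : V) : Prop :=
  OrderUnit {
    cone_closed : closed K;
    coneD : forall a b, K a -> K b -> K (a + b);
    coneZ : forall (c : R) a, 0 <= c -> K a -> K (c *: a);
    cone_pointed : forall a, K a -> K (- a) -> a = 0;
    unit_interior : interior K v;
    unit_neq0 : v != 0 }.

Section Gauge.
Context {R : realType} {V : normedModType R} (K : set V) (v : V).
Hypothesis Kv : order_unit K v.

Definition gauge (u : V) : R := inf [set l : R | K (u + l *: v)].

Definition osc (u : V) : R := gauge u + gauge (- u).

Lemma interior_ball (b : V) :
  interior K b -> exists2 r : R, 0 < r & forall y, `|b - y| < r -> K y.
Proof.
move=> /nbhs_ballP[r r0 Hr]; exists r => // y Hy; apply: Hr.
by rewrite -ball_normE.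
Qed.

Lemma cone_unit : K v.
Proof. exact: nbhs_singleton (unit_interior Kv). Qed.

Lemma cone0 : K 0.
Proof. by rewrite -(scale0r v); apply: (coneZ Kv) (lexx _) cone_unit. Qed.

Lemma norm_unit_gt0 : 0 < `|v|.
Proof. by rewrite normr_gt0 (unit_neq0 Kv). Qed.

Lemma cone_scale_unit_ge0 (c : R) : K (c *: v) -> 0 <= c.
Proof.
move=> Kc; rewrite leNgt; apply/negP => c_lt0.
have : K (- v).
  have -> : - v = (- c^-1) *: (c *: v).
    by rewrite scalerA mulNr mulVf ?lt_eqF // scaleN1r.
  by apply: (coneZ Kv) Kc; rewrite oppr_ge0 invr_le0 ltW.
by move/(cone_pointed Kv cone_unit)/eqP; rewrite (negbTE (unit_neq0 Kv)).
Qed.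

Section UnitBall.
Variable r : R.
Hypothesis r_gt0 : 0 < r.
Hypothesis ball_unit : forall y, `|v - y| < r -> K y.

Lemma cone_addr_large_unit (u : V) (l : R) : `|u| / r < l -> K (u + l *: v).
Proof.
move=> ul; have l_gt0 : 0 < l by apply: le_lt_trans ul; rewrite divr_ge0 // ltW.
have -> : u + l *: v = l *: (l^-1 *: u + v).
  by rewrite scalerDr scalerA mulfV ?gt_eqF // scale1r.
apply: (coneZ Kv) (ltW l_gt0) _; apply: ball_unit.
rewrite opprD addrCA subrr addr0 normrN normrZ gtr0_norm ?invr_gt0 //.
rewrite mulrC ltr_pdivrMr //; rewrite ltr_pdivrMr // in ul.
by rewrite mulrC.
Qed.

Lemma cone_addr_unit_lb (u : V) (l : R) : K (u + l *: v) -> - (`|u| / r + 1) <= l.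
Proof.
move=> Kl; have Kopp : K (- u + (`|u| / r + 1) *: v).
  by apply: cone_addr_large_unit; rewrite normrN ltrDl.
have := coneD Kv Kl Kopp; rewrite addrACA addrN add0r -scalerDl.
by move=> /cone_scale_unit_ge0; lra.
Qed.

Lemma gauge_le_norm (u : V) : gauge u <= `|u| / r.
Proof.
apply/ler_addgt0Pr => e e_gt0; apply: ge_inf.
  by exists (- (`|u| / r + 1)) => l; apply: cone_addr_unit_lb.
by apply: cone_addr_large_unit; rewrite ltrDl.
Qed.

Lemma osc_le_norm (u : V) : osc u <= 2 * (`|u| / r).
Proof. by have := gauge_le_norm u; have := gauge_le_norm (- u); rewrite normrN /osc; lra. Qed.

Lemma osc_lt_norm (u : V) (d : R) : `|u| < d * r -> osc u < 2 * d.
Proof. by move=> ud; apply: le_lt_trans (osc_le_norm u) _; rewrite ltr_pM2l // ltr_pdivrMr. Qed.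

End UnitBall.

Lemma gauge_set_bounded (u : V) :
  [set l : R | K (u + l *: v)] !=set0 /\ has_lbound [set l : R | K (u + l *: v)].
Proof.
have [r r_gt0 ball_unit] := interior_ball (unit_interior Kv).
split; first by exists (`|u| / r + 1); apply: (cone_addr_large_unit r_gt0); rewrite ?ltrDl.
by exists (- (`|u| / r + 1)) => l; apply: (cone_addr_unit_lb r_gt0).
Qed.

Lemma gauge_le (u : V) (l : R) : K (u + l *: v) -> gauge u <= l.
Proof. by apply: ge_inf; case: (gauge_set_bounded u). Qed.

Lemma cone_add_gauge (u : V) : K (u + gauge u *: v).
Proof.
apply: (cone_closed Kv) => B /nbhs_ballP[e e_gt0 eB].
have [l Kl gauge_l] := inf_adherent (divr_gt0 e_gt0 norm_unit_gt0) (gauge_set_bounded u).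
exists (u + l *: v); split => //; apply: eB.
rewrite -ball_normE /ball_ /= opprD addrACA subrr add0r -scalerBl normrZ.
rewrite -ltr_pdivlMr ?norm_unit_gt0 // ler0_norm ?subr_le0 ?gauge_le //.
by rewrite opprB ltrBlDl.
Qed.

Lemma gauge_addr_unit (u : V) (c : R) : gauge (u + c *: v) = gauge u - c.
Proof.
apply/eqP; rewrite eq_le; apply/andP; split.
  apply: gauge_le; rewrite -addrA -scalerDl addrCA subrr addr0.
  exact: cone_add_gauge.
rewrite lerBlDr; apply: gauge_le; rewrite scalerDl addrA addrAC.
exact: cone_add_gauge.
Qed.

Lemma gaugeD (u1 u2 : V) : gauge (u1 + u2) <= gauge u1 + gauge u2.
Proof.
by apply: gauge_le; rewrite scalerDl addrACA; apply: (coneD Kv); exact: cone_add_gauge.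
Qed.

Lemma gauge0 : gauge 0 = 0.
Proof.
apply/eqP; rewrite eq_le; apply/andP; split.
  by apply: gauge_le; rewrite scale0r addr0; exact: cone0.
by apply: cone_scale_unit_ge0; rewrite -[_ *: v]add0r; exact: cone_add_gauge.
Qed.

Lemma addr_scale_unit_eq0 (u : V) (c : R) : u + c *: v = 0 -> u = (- c) *: v.
Proof. by move/eqP; rewrite addr_eq0 -scaleNr => /eqP. Qed.

Lemma osc_ge0 (u : V) : 0 <= osc u.
Proof. by rewrite -gauge0 -(subrr u); apply: gaugeD. Qed.

Lemma oscN (u : V) : osc (- u) = osc u.
Proof. by rewrite /osc opprK addrC. Qed.

Lemma oscD (u1 u2 : V) : osc (u1 + u2) <= osc u1 + osc u2.
Proof. by rewrite /osc opprD addrACA lerD // gaugeD. Qed.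

Lemma osc_triangle (a b c : V) : osc (c - a) <= osc (b - a) + osc (c - b).
Proof.
have <- : (b - a) + (c - b) = c - a by rewrite addrC addrA subrK.
exact: oscD.
Qed.

Lemma osc_addr_unit (u : V) (c : R) : osc (u + c *: v) = osc u.
Proof.
by rewrite /osc opprD -scaleNr !gauge_addr_unit; lra.
Qed.

Lemma osc_scale_unit (c : R) : osc (c *: v) = 0.
Proof. by rewrite -[c *: v]add0r osc_addr_unit /osc oppr0 gauge0 addr0. Qed.

Lemma osc_eq0 (u : V) : osc u = 0 -> exists c, u = c *: v.
Proof.
move=> osc0; exists (- gauge u); apply: addr_scale_unit_eq0.
apply: (cone_pointed Kv); first exact: cone_add_gauge.
have -> : - (u + gauge u *: v) = - u + gauge (- u) *: v.
  by rewrite opprD -scaleNr; congr (_ + _ *: v); move: osc0; rewrite /osc; lra.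
exact: cone_add_gauge.
Qed.

Lemma interior_cone_subr_unit (b : V) :
  interior K b -> exists2 e : R, 0 < e & K (b - e *: v).
Proof.
move=> /interior_ball[rho rho_gt0 ball_b].
have e_gt0 : 0 < rho / (2 * `|v|) by rewrite divr_gt0 // mulr_gt0 // norm_unit_gt0.
exists (rho / (2 * `|v|)) => //; apply: ball_b.
rewrite opprB addrC subrK normrZ gtr0_norm //.
have -> : rho / (2 * `|v|) * `|v| = rho / 2 by field; rewrite gt_eqF ?norm_unit_gt0.
lra.
Qed.

Section Contraction.
Variables (S : set V) (F : V -> V).
Hypothesis S_addr_unit : forall x (l : R), S x -> S (x + l *: v).
Hypothesis F_addr_unit : forall x (l : R), S x -> F (x + l *: v) = F x + l *: v.
Hypothesis F_strict : forall x y, S x -> S y -> K (x - y) -> x <> y ->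
  interior K (F x - F y).

Lemma gauge_contract_lt (y z : V) : S y -> S z -> z - y + gauge (z - y) *: v != 0 ->
  gauge (F z - F y) < gauge (z - y).
Proof.
move=> Sy Sz ne; set g := gauge (z - y).
have : interior K (F (z + g *: v) - F y).
  apply: F_strict => //; first exact: S_addr_unit.
    by rewrite addrAC; exact: cone_add_gauge.
  by move=> e; move: ne; rewrite addrAC e subrr eqxx.
rewrite F_addr_unit // => /interior_cone_subr_unit[e e_gt0 Ke].
suff : gauge (F z - F y) <= g - e by lra.
by apply: gauge_le; rewrite scalerBl addrA (addrAC (F z)).
Qed.

Lemma gauge_contract (y z : V) : S y -> S z -> gauge (F z - F y) <= gauge (z - y).
Proof.
move=> Sy Sz; have [e|ne] := eqVneq (z - y + gauge (z - y) *: v) 0; last first.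
  exact/ltW/gauge_contract_lt.
have -> : z = y + (- gauge (z - y)) *: v by rewrite -(addr_scale_unit_eq0 e) addrC subrK.
by rewrite F_addr_unit // !(addrC y) addrK addrAC subrr add0r.
Qed.

Lemma osc_contract (y z : V) : S y -> S z -> osc (F z - F y) <= osc (z - y).
Proof. by move=> Sy Sz; rewrite /osc !opprB lerD // gauge_contract. Qed.

Lemma osc_contract_lt (y z : V) : S y -> S z -> 0 < osc (z - y) ->
  osc (F z - F y) < osc (z - y).
Proof.
move=> Sy Sz osc_gt0.
have ne : z - y + gauge (z - y) *: v != 0.
  by apply/eqP => /addr_scale_unit_eq0 e; move: osc_gt0; rewrite e osc_scale_unit ltxx.
have := gauge_contract_lt Sy Sz ne; have := gauge_contract Sz Sy.
by rewrite /osc !opprB; lra.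
Qed.

End Contraction.

End Gauge.

Section Projection.
Context {R : realType} {n : nat} (v : 'rV[R]_n).

Lemma dotvD (a b : 'rV[R]_n) : dotv v (a + b) = dotv v a + dotv v b.
Proof. by rewrite /dotv -big_split; apply: eq_bigr => i _; rewrite mxE mulrDr. Qed.

Lemma dotvZ (c : R) (a : 'rV[R]_n) : dotv v (c *: a) = c * dotv v a.
Proof. by rewrite /dotv mulr_sumr; apply: eq_bigr => i _; rewrite mxE mulrCA. Qed.

Lemma dotvB (a b : 'rV[R]_n) : dotv v (a - b) = dotv v a - dotv v b.
Proof. by rewrite -scaleN1r dotvD dotvZ mulN1r. Qed.

Lemma pivE (a : 'rV[R]_n) : piv v a = a + (- dotv v a) *: v.
Proof. by rewrite scaleNr. Qed.

Lemma piv_eq0 (a : 'rV[R]_n) : piv v a = 0 -> a = dotv v a *: v.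
Proof. by move/eqP; rewrite subr_eq0 => /eqP. Qed.

Lemma pivD (a b : 'rV[R]_n) : piv v (a + b) = piv v a + piv v b.
Proof. by rewrite /piv dotvD scalerDl opprD addrACA. Qed.

Lemma pivZ (c : R) (a : 'rV[R]_n) : piv v (c *: a) = c *: piv v a.
Proof. by rewrite /piv dotvZ scalerBr scalerA. Qed.

Lemma pivB (a b : 'rV[R]_n) : piv v (a - b) = piv v a - piv v b.
Proof. by rewrite pivD -scaleN1r pivZ scaleN1r. Qed.

Lemma piv_continuous : continuous (piv v).
Proof.
have term_cont (i : 'I_n) : continuous (fun x : 'rV[R]_n => v ord0 i * x ord0 i).
  by move=> x; apply: cvgMl_tmp (@coord_continuous R 1 n ord0 i x).
have dotv_cont : continuous (dotv v).
  exact: (continuous_big add_continuous (fun i _ => term_cont i)).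
move=> x; have scale_cont := @continuousZr_tmp R _ _ (dotv v) v x (dotv_cont x).
exact: (cvgB cvg_id scale_cont).
Qed.

Hypothesis dotv_unit : dotv v v = 1.

Lemma piv_addr_unit (a : 'rV[R]_n) (c : R) : piv v (a + c *: v) = piv v a.
Proof.
by rewrite /piv dotvD dotvZ dotv_unit mulr1 scalerDl opprD addrACA subrr addr0.
Qed.

Lemma dotv_piv (a : 'rV[R]_n) : dotv v (piv v a) = 0.
Proof. by rewrite /piv dotvB dotvZ dotv_unit mulr1 subrr. Qed.

End Projection.

Section Translation.
Context {R : realType} {V : normedModType R}.

Lemma interior_translate (J : set R) (T s : R) :
  interior [set u | J (T + u)] s -> interior J (T + s).
Proof.
move=> Js; have : nbhs (- T + (T + s)) [set u | J (T + u)] by rewrite addKr.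
by move=> /nbhsDr; apply: filterS => u /=; rewrite addNKr.
Qed.

Lemma is_derive_translate (g : R -> V) (T s : R) (dg : V) :
  is_derive (T + s) 1 g dg -> is_derive s 1 (fun u => g (T + u)) dg.
Proof.
case=> g_derivable g_derive.
have quotE : (fun h : R => h^-1 *: (((fun u => g (T + u)) \o shift s) (h *: 1) - g (T + s)))
   = (fun h => h^-1 *: ((g \o shift (T + s)) (h *: 1) - g (T + s))).
  by apply/funext => h /=; rewrite addrCA.
apply: DeriveDef; first by move: g_derivable; rewrite /derivable -quotE.
by rewrite -g_derive /derive quotE.
Qed.

End Translation.

Section Solutions.
Context {R : realType} {n : nat} (X : set 'rV[R]_n) (f : 'rV[R]_n -> 'rV[R]_n).

Lemma solution_translate (J : set R) (x : R -> 'rV[R]_n) (T : R) :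
  solution X f J x -> solution X f [set u | J (T + u)] (fun u => x (T + u)).
Proof.
case=> J_itv Jx x_cont x_deriv; split.
- move=> a b c /= Ja Jc ab bc.
  by apply: (J_itv (T + a) (T + b) (T + c)); rewrite ?lerD2l.
- by move=> u Ju; apply: Jx.
- apply/subspace_continuousP => u Ju.
  have shift_cvg : (fun w => T + w) @ within [set w | J (T + w)] (nbhs u) -->
      within J (nbhs (T + u)) by move=> P /nbhsDr.
  exact: cvg_comp shift_cvg ((subspace_continuousP _ _).1 x_cont (T + u) Ju).
- by move=> u /interior_translate Ju; apply: is_derive_translate; exact: x_deriv.
Qed.

Lemma solution_addr (J : set R) (x : R -> 'rV[R]_n) (c : 'rV[R]_n) :
  (forall y, X y -> X (y + c)) -> (forall y, X y -> f (y + c) = f y) ->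
  solution X f J x -> solution X f J (fun t => x t + c).
Proof.
move=> X_addr f_addr [J_itv Jx x_cont x_deriv]; split => //.
- by move=> t Jt; apply: X_addr; apply: Jx.
- apply/subspace_continuousP => t Jt; apply: cvgD; last exact: cvg_cst.
  exact: (subspace_continuousP _ _).1 x_cont t Jt.
- move=> t Jt; rewrite f_addr; last exact: Jx (nbhs_singleton Jt).
  have x_deriv_t := x_deriv t Jt.
  have : is_derive t 1 (fun t => x t + c) (f (x t) + 0) by apply: is_deriveD.
  by rewrite addr0.
Qed.

End Solutions.

Lemma compact_cluster_pinfty {R : realType} {T : topologicalType} (B : set T) (p : R -> T) :
  compact B -> (\forall t \near +oo, B (p t)) ->
  exists2 q, B q & forall (U : set T) (t0 : R), nbhs q U -> exists2 t, t0 <= t & U (p t).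
Proof.
move=> B_compact p_B; have [q [Bq q_cluster]] := B_compact (p @ +oo) _ p_B.
exists q => // U t0 qU.
have p_late : \forall t \near +oo, [set z | exists2 t, t0 <= t & z = p t] (p t).
  by near=> t; exists t => //; near: t; apply: nbhs_pinfty_ge; exact: num_real.
by have [_ [[t t0t ->] Upt]] := q_cluster _ _ p_late qU; exists t.
Unshelve. all: by end_near.
Qed.

Section Flow.
Context {R : realType} {n : nat} (X : set 'rV[R]_n) (f : 'rV[R]_n -> 'rV[R]_n)
  (D : 'rV[R]_n -> set R) (phi : R -> 'rV[R]_n -> 'rV[R]_n) (v : 'rV[R]_n).
Hypothesis phi_complete : forward_complete X f D phi.
Hypothesis X_addr_v : forall y (l : R), X y -> X (y + l *: v).
Hypothesis phi_addr_v : forall y (l : R) t, X y -> D y t ->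
  phi t (y + l *: v) = phi t y + l *: v.

Lemma flow0 (y : 'rV[R]_n) : X y -> phi 0 y = y.
Proof. by move=> Xy; case: (phi_complete.1 _ Xy). Qed.

Lemma flow_in (y : 'rV[R]_n) (t : R) : X y -> D y t -> X (phi t y).
Proof. by move=> Xy; case: (phi_complete.1 _ Xy) => _ _ [_ phiX _ _] _; exact: phiX. Qed.

Lemma flow_dom_gt (y : 'rV[R]_n) : X y -> exists2 a : R, a < 0 & forall t, a < t -> D y t.
Proof.
move=> Xy; have [a [a_lt0 Da]] := phi_complete.2 _ Xy.
by exists a => // t at_; apply: Da; rewrite /= in_itv /= at_.
Qed.

Lemma flow_dom_ge0 (y : 'rV[R]_n) (t : R) : X y -> 0 <= t -> D y t.
Proof. by move=> /flow_dom_gt[a a_lt0 Da] t_ge0; apply: Da; lra. Qed.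

Lemma flow_dom_interior0 (y : 'rV[R]_n) : X y -> interior (D y) 0.
Proof.
move=> /flow_dom_gt[a a_lt0 Da]; apply/nbhs_ballP; exists (- a); first by rewrite /= oppr_gt0.
move=> t; rewrite -ball_normE /ball_ /= sub0r normrN => t_small; apply: Da.
by move: t_small; rewrite ltr_norml; lra.
Qed.

Lemma flow_derive0 (y : 'rV[R]_n) : X y -> is_derive (0 : R) (1 : R) (fun t => phi t y) (f y).
Proof.
move=> Xy; case: (phi_complete.1 _ Xy) => _ phi0 [_ _ _ phi_deriv] _.
by rewrite -{2}phi0; apply: phi_deriv; exact: flow_dom_interior0.
Qed.

Lemma f_addr_v (y : 'rV[R]_n) (l : R) : X y -> f (y + l *: v) = f y.
Proof.
move=> Xy; have phi_deriv := flow_derive0 Xy.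
have : is_derive (0 : R) (1 : R) (fun t => phi t y + l *: v) (f y + 0) by apply: is_deriveD.
rewrite addr0 => shifted_deriv.
have deriv_fy : is_derive (0 : R) (1 : R) (fun t => phi t (y + l *: v)) (f y).
  apply: near_eq_is_derive shifted_deriv.
  by near=> t; rewrite phi_addr_v //; near: t; exact: flow_dom_interior0.
have deriv_fyl := flow_derive0 (X_addr_v l Xy).
by rewrite -(@derive_val _ _ _ _ _ _ _ deriv_fyl) (@derive_val _ _ _ _ _ _ _ deriv_fy).
Unshelve. all: by end_near.
Qed.

Lemma X_piv (y : 'rV[R]_n) : X y -> X (piv v y).
Proof. by rewrite pivE; exact: X_addr_v. Qed.

Lemma flow_dom_addr_v (y : 'rV[R]_n) (l : R) : X y -> D y `<=` D (y + l *: v).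
Proof.
move=> Xy; case: (phi_complete.1 _ Xy) => D0 phi0 phi_sol _.
case: (phi_complete.1 _ (X_addr_v l Xy)) => _ _ _ /(_ (D y)) phi_max.
have [] // := phi_max (fun t => phi t y + l *: v) D0; first by rewrite phi0.
apply: solution_addr => //; first by move=> z; exact: X_addr_v.
by move=> z; exact: f_addr_v.
Qed.

Lemma flow_comp (y : 'rV[R]_n) (T s : R) : X y -> D y T -> D y (T + s) ->
  D (phi T y) s /\ phi s (phi T y) = phi (T + s) y.
Proof.
move=> Xy DT DTs; case: (phi_complete.1 _ Xy) => _ _ phi_sol _.
case: (phi_complete.1 _ (flow_in Xy DT)) => _ _ _ /(_ [set u | D y (T + u)]) phi_max.
have [] := phi_max (fun u => phi (T + u) y); rewrite /= ?addr0 //.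
  exact: (solution_translate T phi_sol).
by move=> Ds phiE; split; [exact: Ds | rewrite phiE].
Qed.

Lemma flow_eq_line (y : 'rV[R]_n) (c : R) : X y -> f y = c *: v ->
  forall t, D y t /\ phi t y = y + t *: f y.
Proof.
move=> Xy fy; case: (phi_complete.1 _ Xy) => _ _ _ /(_ setT) phi_max.
have [] := phi_max (fun t => y + t *: f y) I; first by rewrite scale0r addr0.
  split => //.
  - by move=> t _; rewrite fy scalerA; exact: X_addr_v.
  - apply: continuous_subspaceT => t.
    by apply: cvgD; [exact: cvg_cst | exact: cvgZr_tmp cvg_id].
  - move=> t _; rewrite fy scalerA f_addr_v // -fy.
    have line_deriv : is_derive t (1 : R) (fun s : R => s *: f y) (f y).
      apply: DeriveDef; first exact: diff_derivable.
      by rewrite deriveE // diff_val scale1r.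
    have : is_derive t (1 : R) (fun s : R => y + s *: f y) (0 + f y) by apply: is_deriveD.
    by rewrite add0r.
by move=> Dy phiE t; split; [exact: Dy | rewrite phiE].
Qed.

Lemma piv_f_eq0 (xi : 'rV[R]_n) : X xi ->
  (forall h, 0 < h -> piv v (phi h xi) = piv v xi) -> piv v (f xi) = 0.
Proof.
move=> Xxi piv_const; case: (flow_derive0 Xxi) => quot_cvg quot_lim.
pose quot (h : R) := h^-1 *: (phi (h *: 1 + 0) xi - phi 0 xi).
have quot_to_f : quot @ 0^' --> f xi by rewrite -quot_lim; exact: quot_cvg.
have quot_right : quot @ 0^'+ --> f xi.
  apply: cvg_trans quot_to_f => P; rewrite !nbhs_simpl /= /at_right /dnbhs /within /=.
  by apply: filterS => h P_h h_gt0; apply: P_h; rewrite gt_eqF.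
have piv_quot_to_piv_f : (piv v \o quot) @ 0^'+ --> piv v (f xi).
  exact: (@cvg_comp _ _ _ quot (piv v) _ _ _ quot_right (@piv_continuous _ _ v (f xi))).
have piv_quot_to_0 : (piv v \o quot) @ 0^'+ --> (0 : 'rV[R]_n).
  apply: cvg_near_cst; near=> h; rewrite /= /quot.
  have h_gt0 : 0 < h by near: h; exact: nbhs_right_gt.
  have -> : h *: (1 : R) + 0 = h by rewrite addr0; exact: mulr1.
  by rewrite pivZ pivB piv_const // flow0 // subrr scaler0.
exact: cvg_unique piv_quot_to_piv_f piv_quot_to_0.
Unshelve. all: by end_near.
Qed.

Variable K : set 'rV[R]_n.
Hypothesis Kv : order_unit K v.
Hypothesis phi_strict : forall y z t, X y -> X z -> t < 0 -> D y t -> D z t ->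
  cone_succ K y z -> cone_gg K (phi t y) (phi t z).
Local Notation osc := (osc K v).

Lemma osc_subr_piv (a b : 'rV[R]_n) : osc (a - piv v b) = osc (a - b).
Proof. by rewrite /piv opprB addrCA addrC (osc_addr_unit Kv). Qed.

Lemma osc_piv_subr (a b : 'rV[R]_n) : osc (piv v a - b) = osc (a - b).
Proof. by rewrite -opprB oscN osc_subr_piv -oscN opprB. Qed.

Lemma flow_osc_contract (t : R) (y z : 'rV[R]_n) :
  t < 0 -> X y -> X z -> D y t -> D z t ->
  osc (phi t z - phi t y) <= osc (z - y) /\
  (0 < osc (z - y) -> osc (phi t z - phi t y) < osc (z - y)).
Proof.
move=> t_lt0 Xy Xz Dy Dz; pose S := [set x | X x /\ D x t].
have S_addr (x : 'rV[R]_n) (l : R) : S x -> S (x + l *: v).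
  case=> Xx Dx; split; first exact: X_addr_v.
  exact: flow_dom_addr_v.
have phi_addr (x : 'rV[R]_n) (l : R) : S x -> phi t (x + l *: v) = phi t x + l *: v.
  by case=> Xx Dx; exact: phi_addr_v.
have phi_strict_t (x x' : 'rV[R]_n) : S x -> S x' -> K (x - x') -> x <> x' ->
    interior K (phi t x - phi t x').
  by case=> Xx Dx [Xx' Dx'] Kx ne; exact: phi_strict.
split; first exact: (osc_contract Kv S_addr phi_addr phi_strict_t (conj Xy Dy) (conj Xz Dz)).
exact: (osc_contract_lt Kv S_addr phi_addr phi_strict_t (conj Xy Dy) (conj Xz Dz)).
Qed.

Lemma flow_back (y : 'rV[R]_n) (t t0 : R) : X y -> t0 <= 0 -> 0 <= t + t0 ->
  D (phi t y) t0 /\ phi t0 (phi t y) = phi (t + t0) y.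
Proof. by move=> Xy t0_le0 tt0_ge0; apply: flow_comp => //; apply: flow_dom_ge0 => //; lra. Qed.

Lemma osc_flow_nondecr (xi : 'rV[R]_n) (s t1 t2 : R) :
  X xi -> 0 <= s -> 0 <= t1 -> t1 <= t2 ->
  osc (phi (t1 + s) xi - phi t1 xi) <= osc (phi (t2 + s) xi - phi t2 xi).
Proof.
move=> Xxi s_ge0 t1_ge0 t12.
have [<-|t12_neq] := eqVneq t1 t2; first exact: lexx.
have t0_lt0 : t1 - t2 < 0 by rewrite subr_lt0 lt_neqAle t12_neq.
have [D1 E1] := @flow_back xi t2 (t1 - t2) Xxi (ltW t0_lt0) ltac:(lra).
have [D2 E2] := @flow_back xi (t2 + s) (t1 - t2) Xxi (ltW t0_lt0) ltac:(lra).
have X1 := flow_in Xxi (flow_dom_ge0 Xxi (le_trans t1_ge0 t12)).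
have X2 := flow_in Xxi (flow_dom_ge0 Xxi (addr_ge0 (le_trans t1_ge0 t12) s_ge0)).
have [contract _] := flow_osc_contract t0_lt0 X1 X2 D1 D2.
have e1 : t2 + (t1 - t2) = t1 by ring.
have e2 : t2 + s + (t1 - t2) = t1 + s by ring.
by move: contract; rewrite E1 E2 e1 e2.
Qed.

Hypothesis X_closed : closed X.

Section BoundedOrbit.
Variables (xi : 'rV[R]_n) (M s r : R).
Hypothesis Xxi : X xi.
Hypothesis orbit_bounded : forall t, 0 <= t -> `|piv v (phi t xi)| <= M.
Hypothesis s_ge0 : 0 <= s.
Hypothesis r_gt0 : 0 < r.
Hypothesis ball_unit : forall y, `|v - y| < r -> K y.

Let p (t : R) := piv v (phi t xi).
Let g (t : R) := osc (phi (t + s) xi - phi t xi).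
Let cluster_pair (q q' : 'rV[R]_n) := forall e : R, 0 < e -> forall T : R, exists t : R,
  [/\ T <= t, 0 <= t, `|p t - q| < e & `|p (t + s) - q'| < e].

Lemma exists_cluster_pair : exists q q', [/\ X q, X q' & cluster_pair q q'].
Proof.
have M1_gt0 : 0 < M + 1.
  by have := le_trans (normr_ge0 _) (orbit_bounded (lexx 0)); lra.
pose B := X `&` closed_ball (0 : 'rV[R]_n) (M + 1).
have B_compact : compact B.
  apply: bounded_closed_compact; last exact: closedI X_closed (@closed_ball_closed _ _ _ _).
  rewrite /= /bounded_near; near=> M' => y [_].
  rewrite closed_ballE // /closed_ball_ /= sub0r normrN => yM.
  by apply: le_trans yM _; near: M'; apply: nbhs_pinfty_ge; exact: num_real.
have pB t : 0 <= t -> B (p t).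
  move=> t_ge0; split; first exact/X_piv/flow_in/flow_dom_ge0.
  by rewrite closed_ballE // /closed_ball_ /= sub0r normrN; have := orbit_bounded t_ge0; lra.
have pairB : \forall t \near +oo, (B `*` B) (p t, p (t + s)).
  have t_late : \forall t \near +oo, (0 : R) <= t by apply: nbhs_pinfty_ge; exact: num_real.
  by apply: filterS t_late => t t_ge0; split; apply: pB => //; exact: addr_ge0.
have [[q q'] [Bq Bq'] q_cluster] := compact_cluster_pinfty (compact_setX B_compact B_compact) pairB.
exists q, q'; split; [by case: Bq | by case: Bq' | move=> e e_gt0 T].
have [t Tt [/= ball_q ball_q']] := q_cluster _ (Num.max T 0) (nbhsx_ballx (q, q') e e_gt0).
move: Tt ball_q ball_q'; rewrite ge_max -!ball_normE /ball_ /= => /andP[Tt t_ge0].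
by rewrite !(distrC q) !(distrC q'); exists t.
Unshelve. all: by end_near.
Qed.

Lemma osc_cluster_le (q q' : 'rV[R]_n) (L : R) :
  (forall t, 0 <= t -> g t <= L) -> cluster_pair q q' -> osc (q' - q) <= L.
Proof.
move=> g_le_L qq'; apply/ler_addgt0Pr => e e_gt0.
have e4r_gt0 : 0 < e / 4 * r by rewrite mulr_gt0 // divr_gt0.
have [t [_ t_ge0 ptq pt'q']] := qq' _ e4r_gt0 0.
have osc_q := osc_lt_norm Kv r_gt0 ball_unit ptq.
rewrite distrC in pt'q'; have osc_q' := osc_lt_norm Kv r_gt0 ball_unit pt'q'.
have gt : osc (p (t + s) - p t) <= L by rewrite osc_piv_subr osc_subr_piv; exact: g_le_L.
have := osc_triangle Kv q (p t) q'; have := osc_triangle Kv (p t) (p (t + s)) q'.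
lra.
Qed.

Lemma osc_cluster_flow_ge (q q' : 'rV[R]_n) (L t0 : R) :
  t0 < 0 -> X q -> X q' -> D q t0 -> D q' t0 ->
  (forall e : R, 0 < e -> exists2 T : R, 0 <= T & L - e < g T) -> cluster_pair q q' ->
  L <= osc (phi t0 q' - phi t0 q).
Proof.
move=> t0_lt0 Xq Xq' Dq Dq' L_adherent qq'; apply/ler_addgt0Pr => e e_gt0.
have [T T_ge0 gT] := L_adherent (e / 2) ltac:(lra).
have e8r_gt0 : 0 < e / 8 * r by rewrite mulr_gt0 // divr_gt0.
have [t [Tt t_ge0 ptq pt'q']] := qq' _ e8r_gt0 (T - t0).
have tt0_ge0 : 0 <= t + t0 by lra.
have [Dt Et] := flow_back Xxi (ltW t0_lt0) tt0_ge0.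
have tst0_ge0 : 0 <= t + s + t0 by rewrite addrAC addr_ge0.
have [Dts Ets] := flow_back Xxi (ltW t0_lt0) tst0_ge0.
have Xt := flow_in Xxi (flow_dom_ge0 Xxi t_ge0).
have Xts := flow_in Xxi (flow_dom_ge0 Xxi (addr_ge0 t_ge0 s_ge0)).
have contract_q : osc (phi t0 q - phi (t + t0) xi) <= osc (q - p t).
  by rewrite -Et osc_subr_piv; case: (flow_osc_contract t0_lt0 Xt Xq Dt Dq).
have contract_q' : osc (phi (t + s + t0) xi - phi t0 q') <= osc (p (t + s) - q').
  by rewrite -Ets osc_piv_subr; case: (flow_osc_contract t0_lt0 Xq' Xts Dq' Dts).
rewrite distrC in ptq; have osc_q := osc_lt_norm Kv r_gt0 ball_unit ptq.
have osc_q' := osc_lt_norm Kv r_gt0 ball_unit pt'q'.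
have g_mono : g T <= osc (phi (t + s + t0) xi - phi (t + t0) xi).
  by rewrite addrAC; apply: osc_flow_nondecr => //; lra.
have := osc_triangle Kv (phi (t + t0) xi) (phi t0 q) (phi (t + s + t0) xi).
have := osc_triangle Kv (phi t0 q) (phi t0 q') (phi (t + s + t0) xi).
lra.
Qed.

Lemma bounded_orbit_osc_eq0 : osc (phi s xi - xi) = 0.
Proof.
have g0 : g 0 = osc (phi s xi - xi) by rewrite /g add0r flow0.
apply/eqP; rewrite eq_le (osc_ge0 Kv) andbT leNgt -g0; apply/negP => g0_gt0.
have g_bounded t : 0 <= t -> g t <= 2 * ((M + M) / r).
  move=> t_ge0; rewrite /g -osc_subr_piv -osc_piv_subr.
  apply: le_trans (osc_le_norm Kv r_gt0 ball_unit _) _.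
  rewrite ler_pM2l // ler_pM2r ?invr_gt0 //; apply: le_trans (ler_normB _ _) _.
  by apply: lerD; apply: orbit_bounded => //; exact: addr_ge0.
pose G := [set y | exists2 t : R, 0 <= t & y = g t].
have G_sup : has_sup G.
  split; first by exists (g 0); exists 0.
  by exists (2 * ((M + M) / r)) => _ [t t_ge0 ->]; exact: g_bounded.
have g_le_L t : 0 <= t -> g t <= sup G.
  by move=> t_ge0; apply: sup_upper_bound => //; exists t.
have L_adherent (e : R) : 0 < e -> exists2 T : R, 0 <= T & sup G - e < g T.
  by move=> e_gt0; have [_ [T T_ge0 ->] gT] := sup_adherent e_gt0 G_sup; exists T.
have [q [q' [Xq Xq' qq']]] := exists_cluster_pair.
have [t0 [t0_lt0 Dq Dq']] : exists t0, [/\ t0 < 0, D q t0 & D q' t0].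
  have [a a_lt0 Da] := flow_dom_gt Xq; have [a' a'_lt0 Da'] := flow_dom_gt Xq'.
  have [aa'|a'a] := leP a a'; [exists (a' / 2) | exists (a / 2)].
    by split; [lra | apply: Da; lra | apply: Da'; lra].
  by split; [lra | apply: Da; lra | apply: Da'; lra].
have le_L := osc_cluster_le g_le_L qq'.
have L_le := osc_cluster_flow_ge t0_lt0 Xq Xq' Dq Dq' L_adherent qq'.
have [contract contract_lt] := flow_osc_contract t0_lt0 Xq Xq' Dq Dq'.
have L_gt0 := lt_le_trans g0_gt0 (g_le_L 0 (lexx 0)).
have [osc_gt0|osc_le0] := ltrP 0 (osc (q' - q)); last lra.
by have := contract_lt osc_gt0; lra.
Qed.

End BoundedOrbit.

Hypothesis dotv_unit : dotv v v = 1.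

Lemma bounded_orbit_piv_const (xi : 'rV[R]_n) (M : R) : X xi ->
    (forall t, 0 <= t -> `|piv v (phi t xi)| <= M) ->
  forall s, 0 <= s -> piv v (phi s xi) = piv v xi.
Proof.
move=> Xxi orbit_bounded s s_ge0.
have [r r_gt0 ball_unit] := interior_ball (unit_interior Kv).
have [c phiE] := osc_eq0 Kv (bounded_orbit_osc_eq0 Xxi orbit_bounded s_ge0 r_gt0 ball_unit).
by rewrite -(subrK xi (phi s xi)) phiE addrC piv_addr_unit.
Qed.

Lemma piv_equilibrium_unique (e e' : 'rV[R]_n) : X e -> X e' ->
  dotv v e = 0 -> dotv v e' = 0 -> piv v (f e) = 0 -> piv v (f e') = 0 -> e' = e.
Proof.
move=> Xe Xe' dotv_e dotv_e' /piv_eq0 fe /piv_eq0 fe'.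
have [De phiE] := flow_eq_line Xe fe (-1).
have [De' phiE'] := flow_eq_line Xe' fe' (-1).
have [_ contract_lt] := flow_osc_contract (ltrN10 R) Xe Xe' De De'.
have osc0 : osc (e' - e) = 0.
  apply/eqP; rewrite eq_le (osc_ge0 Kv) andbT leNgt; apply/negP => /contract_lt.
  by rewrite phiE phiE' fe fe' !scalerA opprD addrACA -scalerBl osc_addr_unit ?ltxx.
have [c ec] := osc_eq0 Kv osc0.
have c0 : c = 0 by move: (dotvB v e' e); rewrite ec dotvZ dotv_unit mulr1 dotv_e dotv_e' subrr.
by apply/eqP; rewrite -subr_eq0 ec c0 scale0r.
Qed.

End Flow.

Lemma proper_cone_order_unit {R : realType} {n : nat} (K : set 'rV[R]_n) (v : 'rV[R]_n) :
  proper_cone K -> interior K v -> dotv v v = 1 -> order_unit K v.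
Proof.
case=> K_closed K_add K_scale K_pointed _ v_int dotv_unit; split => //.
apply/eqP => v0; move: dotv_unit; rewrite v0 /dotv big1 => [/eqP|i _].
  by rewrite eq_sym oner_eq0.
by rewrite mxE mul0r.
Qed.

Theorem corollary2 (R : realType) (n : nat) (X : set 'rV[R]_n)
  (f : 'rV[R]_n -> 'rV[R]_n) (D : 'rV[R]_n -> set R)
  (phi : R -> 'rV[R]_n -> 'rV[R]_n) (K : set 'rV[R]_n) (v : 'rV[R]_n) :
  closed X -> X = closure (interior X) ->
  locally_lipschitz_on X f ->
  forward_complete X f D phi ->
  proper_cone K ->
  (forall xi1 xi2 t, X xi1 -> X xi2 -> t < 0 -> D xi1 t -> D xi2 t ->
     cone_succ K xi1 xi2 -> cone_gg K (phi t xi1) (phi t xi2)) ->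
  interior K v -> dotv v v = 1 ->
  (forall xi (lam : R), X xi -> X (xi + lam *: v)) ->
  (forall xi (lam : R) t, X xi -> D xi t ->
     phi t (xi + lam *: v) = phi t xi + lam *: v) ->
  forall xi, X xi ->
    (exists M : R, forall t, 0 <= t -> `|piv v (phi t xi)| <= M) ->
    exists e, [/\ X e, dotv v e = 0, piv v (f e) = 0,
      (fun t => piv v (phi t xi)) @ +oo --> e &
      (forall e', X e' -> dotv v e' = 0 -> piv v (f e') = 0 -> e' = e)].
Proof.
move=> X_closed _ _ phi_complete K_proper phi_strict v_int dotv_unit X_addr_v phi_addr_v
  xi Xxi [M orbit_bounded].
have Kv := proper_cone_order_unit K_proper v_int dotv_unit.
have piv_const := bounded_orbit_piv_const phi_complete X_addr_v phi_addr_v Kv phi_strict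
  X_closed dotv_unit Xxi orbit_bounded.
have piv_equilibrium : piv v (f (piv v xi)) = 0.
  rewrite [piv v xi]pivE (f_addr_v phi_complete X_addr_v phi_addr_v) //.
  by apply: (piv_f_eq0 phi_complete) => // h /ltW; exact: piv_const.
exists (piv v xi); split => //.
- exact: X_piv.
- exact: dotv_piv.
- apply: cvg_near_cst; near=> t; apply: piv_const.
  by near: t; apply: nbhs_pinfty_ge; exact: num_real.
- move=> e' Xe' dotv_e' piv_fe'.
  apply: (piv_equilibrium_unique phi_complete X_addr_v phi_addr_v Kv phi_strict dotv_unit) => //.
    exact: X_piv.
  exact: dotv_piv.
Unshelve. all: by end_near.
Qed.
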